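(* Let $G,G'$ be locally compact Hausdorff groupoids with Haar systems $\lambda^{u}_{G}$, $\lambda^{u}_{G'}$ and $2$-cocycles $\sigma,\sigma'$, with $G'$ second countable and $G$ metrizable by a metric $d_{G}$ for which inversion is an isometry and $r,s$ are contractions. Let $\pi:G\to G'$ be continuous, proper, a morphism of groupoids, such that for every $u\in G^{0}$, $\pi|_{G^{u}}:G^{u}\to(G')^{\pi(u)}$ is a homeomorphism with $\lambda^{u}_{G}(E)=\lambda^{\pi(u)}_{G'}(\pi(E))$ for Borel $E\subseteq G^u$, and $\sigma(s,t)=\sigma'(\pi(s),\pi(t))$ for composable $(s,t)$. Assume $\pi$ is regular. Let $H'=\{x'\in G':\#\pi^{-1}\{x'\}>1\}$ and $H=\pi^{-1}(H')$, with metrics $d_{H'}(x',y')=d_{G}(\pi^{-1}\{x'\},\pi^{-1}\{y'\})$ (Hausdorff distance) and $d_{H}(x,y)=d_{G}(x,y)+d_{H'}(\pi(x),\pi(y))$. Then $H'$ and $H$, with these metrics, are locally compact Hausdorff topological groupoids, and $\pi:H\to H'$ is an open, continuous, proper morphism of groupoids.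
   Context: $G^{u}=r^{-1}\{u\}$. For compact $E,F\subseteq G$, $d_G(E,F)=\inf\{\epsilon>0: F\subseteq G(E,\epsilon), E\subseteq G(F,\epsilon)\}$ where $G(A,\epsilon)=\{x:d_G(x,y)<\epsilon\text{ for some }y\in A\}$, and $\mathrm{diam}_G(E)=\sup\{d_G(x,y):x,y\in E\}$. The map $\pi$ is regular if for every $x'\in H'$ and $\epsilon>0$ there is an open set $U'\subseteq G'$ containing $x'$ such that every $y'\in U'$ satisfies $d_{G}(\pi^{-1}\{x'\},\pi^{-1}\{y'\})<\epsilon$ or $\mathrm{diam}_{G}(\pi^{-1}\{y'\})<\epsilon$. *)

From HB Require Import structures.
From mathcomp Require Import all_boot all_order all_algebra.
From mathcomp Require Import all_classical all_reals all_analysis.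

Set Implicit Arguments.
Unset Strict Implicit.
Unset Printing Implicit Defensive.

Import Order.TTheory GRing.Theory Num.Theory.
Import numFieldNormedType.Exports.
Local Open Scope classical_set_scope.
Local Open Scope ring_scope.

Record groupoid (G : Type) := Groupoid {
  g_unit : set G;
  g_r : G -> G;
  g_s : G -> G;
  g_mul : G -> G -> G;     (* product, meaningful on composable pairs *)
  g_inv : G -> G }.

Definition composable (G : Type) (Γ : groupoid G) (x y : G) : Prop :=
  g_s Γ x = g_r Γ y.

Definition composable_pairs (G : Type) (Γ : groupoid G) : set (G * G) :=
  [set p | composable Γ p.1 p.2].

Definition is_groupoid (G : Type) (Γ : groupoid G) : Prop :=
  let r := g_r Γ in let s := g_s Γ in let m := g_mul Γ in let i := g_inv Γ in
  (forall x, g_unit Γ (r x) /\ g_unit Γ (s x)) /\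
  (forall u, g_unit Γ u -> r u = u /\ s u = u) /\
  (forall x y, composable Γ x y -> r (m x y) = r x /\ s (m x y) = s y) /\
  (forall x y z, composable Γ x y -> composable Γ y z ->
      m (m x y) z = m x (m y z)) /\
  (forall x, m (r x) x = x /\ m x (s x) = x) /\
  (forall x, [/\ r (i x) = s x, s (i x) = r x,
                 m x (i x) = r x & m (i x) x = s x]).

Definition range_fiber (G : Type) (Γ : groupoid G) (u : G) : set G :=
  [set x | g_r Γ x = u].

Definition groupoid_morphism_on (G G' : Type) (Γ : groupoid G)
  (Γ' : groupoid G') (S : set G) (f : G -> G') : Prop :=
  forall x y, S x -> S y -> composable Γ x y ->
    composable Γ' (f x) (f y) /\ f (g_mul Γ x y) = g_mul Γ' (f x) (f y).

Definition subgroupoid (G : Type) (Γ : groupoid G) (S : set G) : Prop :=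
  (forall x, S x -> [/\ S (g_r Γ x), S (g_s Γ x) & S (g_inv Γ x)]) /\
  (forall x y, S x -> S y -> composable Γ x y -> S (g_mul Γ x y)).

Definition lch_topological_groupoid (G : topologicalType) (Γ : groupoid G) :
  Prop :=
  is_groupoid Γ /\ hausdorff_space G /\ locally_compact [set: G] /\
  continuous (g_inv Γ) /\ continuous (g_r Γ) /\ continuous (g_s Γ) /\
  {within composable_pairs Γ, continuous (fun p => g_mul Γ p.1 p.2)}.

Definition proper_map (X Y : topologicalType) (f : X -> Y) : Prop :=
  forall K : set Y, compact K -> compact (f @^-1` K).

(* (the topology on S is the metric topology of d restricted to S).     *)
Section MetricOnSubset.
Variables (R : realType) (X : Type) (S : set X) (d : X -> X -> R).

Definition metric_on : Prop :=
  forall x y z, S x -> S y -> S z ->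
    [/\ d x x = 0, (d x y = 0 -> x = y), d x y = d y x &
        d x z <= d x y + d y z].

Definition mball (x : X) (e : R) : set X := [set y | S y /\ d x y < e].

Definition mopen (U : set X) : Prop :=
  U `<=` S /\ forall x, U x -> exists2 e, 0 < e & mball x e `<=` U.

Definition mcompact (K : set X) : Prop :=
  K `<=` S /\
  forall (I : Type) (F : I -> set X), (forall i, mopen (F i)) ->
    K `<=` \bigcup_i F i ->
    exists2 D : set I, finite_set D & K `<=` \bigcup_(i in D) F i.

Definition mhausdorff : Prop :=
  forall x y, S x -> S y -> x <> y ->
    exists U V, [/\ mopen U, mopen V, U x, V y & U `&` V = set0].

Definition mlocally_compact : Prop :=
  forall x, S x -> exists2 K, mcompact K & exists2 e, 0 < e & mball x e `<=` K.

End MetricOnSubset.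

Section MetricMaps.
Variables (R : realType) (X Y : Type) (S : set X) (d : X -> X -> R)
  (T : set Y) (e : Y -> Y -> R).

Definition mcontinuous (f : X -> Y) : Prop :=
  (forall x, S x -> T (f x)) /\
  forall x, S x -> forall eps, 0 < eps -> exists2 del, 0 < del &
    forall y, S y -> d x y < del -> e (f x) (f y) < eps.

Definition mopen_map (f : X -> Y) : Prop :=
  forall U, mopen S d U -> mopen T e (f @` U).

Definition mproper (f : X -> Y) : Prop :=
  forall K, mcompact T e K -> mcompact S d (S `&` f @^-1` K).

End MetricMaps.

Definition metric_lch_topological_groupoid (R : realType) (X : Type)
  (Γ : groupoid X) (S : set X) (d : X -> X -> R) : Prop :=
  subgroupoid Γ S /\ mhausdorff S d /\ mlocally_compact S d /\
  mcontinuous S d S d (g_r Γ) /\ mcontinuous S d S d (g_s Γ) /\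
  mcontinuous S d S d (g_inv Γ) /\
      (forall x y, S x -> S y -> composable Γ x y ->
        forall eps, 0 < eps -> exists2 del, 0 < del &
          forall x' y', S x' -> S y' -> composable Γ x' y' ->
            d x x' < del -> d y y' < del ->
            d (g_mul Γ x y) (g_mul Γ x' y') < eps).

Section Hausdorff.
Variables (R : realType) (X : Type) (d : X -> X -> R).

Definition enlarge (A : set X) (eps : R) : set X :=
  [set x | exists2 y, A y & d x y < eps].

Definition hdist (E F : set X) : R :=
  inf [set eps | 0 < eps /\ F `<=` enlarge E eps /\ E `<=` enlarge F eps].

Definition diam (E : set X) : R :=
  sup [set d p.1 p.2 | p in E `*` E].

End Hausdorff.

Definition Borel (G : ptopologicalType) := g_sigma_algebraType (@open G).

Definition borel_set (G : ptopologicalType) (E : set G) : Prop :=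
  <<s @open G >> E.

Section Radon.
Variables (R : realType) (G : ptopologicalType).

Definition radon (mu : {measure set (Borel G) -> \bar R}) : Prop :=
  [/\ (forall K : set G, compact K -> (mu K < +oo)%E),
      (forall E : set G, borel_set E ->
         mu E = ereal_inf [set mu U | U in [set U : set G | open U /\ E `<=` U]]) &
      (forall U : set G, open U ->
         mu U = ereal_sup [set mu K | K in [set K : set G | compact K /\ K `<=` U]])].

Definition msupport (mu : {measure set (Borel G) -> \bar R}) : set G :=
  [set x | forall U : set G, open U -> U x -> (0 < mu U)%E].

Definition Cc (f : G -> R) : Prop :=
  continuous f /\ compact (closure [set x | f x != 0]).

Definition haar_system (Γ : groupoid G)
  (lam : G -> {measure set (Borel G) -> \bar R}) : Prop :=
  [/\ (forall u, g_unit Γ u ->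
         radon (lam u) /\ msupport (lam u) = range_fiber Γ u),
      (forall f, Cc f ->
         {within g_unit Γ, continuous (fun u => fine (\int[lam u]_x (f x)%:E))}) &
      (forall f, Cc f -> forall x,
         (\int[lam (g_s Γ x)]_(y in range_fiber Γ (g_s Γ x))
             (f (g_mul Γ x y))%:E =
          \int[lam (g_r Γ x)]_y (f y)%:E)%E)].

End Radon.

(* circle-valued functions: T is represented inside C = R x R *)
Definition cmul (R : realType) (z w : R * R) : R * R :=
  (z.1 * w.1 - z.2 * w.2, z.1 * w.2 + z.2 * w.1).

Definition two_cocycle (R : realType) (G : topologicalType) (Γ : groupoid G)
  (sigma : G -> G -> R * R) : Prop :=
  let m := g_mul Γ in
  [/\ {within composable_pairs Γ, continuous (fun p => sigma p.1 p.2)},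
      (forall x y, composable Γ x y ->
         (sigma x y).1 ^+ 2 + (sigma x y).2 ^+ 2 = 1),
      (forall x y z, composable Γ x y -> composable Γ y z ->
         cmul (sigma x y) (sigma (m x y) z) = cmul (sigma y z) (sigma x (m y z))) &
      (forall x, sigma (g_r Γ x) x = (1, 0) /\ sigma x (g_s Γ x) = (1, 0))].

Definition metrizes (R : realType) (G : topologicalType) (d : G -> G -> R) :
  Prop :=
  metric_on [set: G] d /\
  forall x : G, nbhs x = filter_from [set e : R | 0 < e] (fun e => [set y | d x y < e]).

Definition pfiber (G G' : Type) (pi : G -> G') (x' : G') : set G :=
  pi @^-1` [set x'].

Definition Hprime (G G' : Type) (pi : G -> G') : set G' :=
  [set x' | exists x1 x2, [/\ pi x1 = x', pi x2 = x' & x1 <> x2]].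

Definition dHprime (R : realType) (G G' : Type) (d : G -> G -> R)
  (pi : G -> G') (x' y' : G') : R :=
  hdist d (pfiber pi x') (pfiber pi y').

Definition dH (R : realType) (G G' : Type) (d : G -> G -> R)
  (pi : G -> G') (x y : G) : R :=
  d x y + dHprime d pi (pi x) (pi y).

Definition regular_map (R : realType) (G : Type) (G' : topologicalType)
  (d : G -> G -> R) (pi : G -> G') : Prop :=
  forall x', Hprime pi x' -> forall eps, 0 < eps ->
    exists U' : set G', [/\ open U', U' x' &
      forall y', U' y' ->
        hdist d (pfiber pi x') (pfiber pi y') < eps \/
        diam d (pfiber pi y') < eps].

(* The fibres pi^-1{x'} are compact because pi is proper, and pi is injective
   on each range fibre G^u, every arrow of G' out of pi(u) lifting to G^u.
   Hence the fibre of r'(x') is the image under r of the fibre of x' (likewise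
   for s', inversion and products), so H' is a subgroupoid on which r', s' and
   inversion are 1-Lipschitz for the Hausdorff distance.  Products are
   continuous on H' because multiplication is uniformly continuous near the
   compact fibres and r has a uniformly continuous inverse on each fibre.
   For local compactness of H': near x' in H', each fibre contains two points
   close to two distinct points of pi^-1{x'}, so its diameter stays bounded
   below, and regularity turns a cluster point of such points in G into a
   cluster point for the Hausdorff distance.  Lifting cluster points through
   the compact fibres gives local compactness of H and properness of pi. *)

From Pilot Require Import Defs.
From HB Require Import structures.
From mathcomp Require Import all_boot all_order all_algebra.
From mathcomp Require Import all_classical all_reals all_analysis.
From mathcomp Require Import lra.
Import Order.TTheory GRing.Theory Num.Theory.
Import numFieldNormedType.Exports.
Local Open Scope classical_set_scope.
Local Open Scope ring_scope.
Set Implicit Arguments.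
Unset Strict Implicit.
Unset Printing Implicit Defensive.

Definition cluster_point (R : realType) (X : Type) (d : X -> X -> R)
    (u : nat -> X) (y : X) : Prop :=
  forall eta, 0 < eta -> forall N, exists2 n, (N <= n)%N & d y (u n) < eta.

Definition seq_compact (R : realType) (X : Type) (d : X -> X -> R)
    (K : set X) : Prop :=
  forall u : nat -> X, (forall n, K (u n)) -> exists2 y, K y & cluster_point d u y.

Lemma finite_nat_ubound (A : set nat) : finite_set A ->
  exists M, forall n, A n -> (n <= M)%N.
Proof.
move=> /finite_fsetP [Y ->].
exists (\sum_(i <- finmap.enum_fset Y) i)%N => n /= nY.
by rewrite (big_rem n nY) /= leq_addr.
Qed.

Lemma invSn_lt_eventually (R : realType) (e : R) : 0 < e ->
  exists N, forall n, (N <= n)%N -> n.+1%:R^-1 < e.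
Proof.
move=> e0; have [N _ HN] := near_infty_natSinv_lt (PosNum e0).
by exists N => n Nn; apply: HN.
Qed.

Section MetricOnSubset.
Variables (R : realType) (X : Type) (S : set X) (d : X -> X -> R).
Hypothesis dS : metric_on S d.

Lemma metric_on_xx x : S x -> d x x = 0.
Proof. by move=> Sx; case: (dS Sx Sx Sx). Qed.

Lemma metric_onC x y : S x -> S y -> d x y = d y x.
Proof. by move=> Sx Sy; case: (dS Sx Sy Sx). Qed.

Lemma metric_on_triangle x y z : S x -> S y -> S z -> d x z <= d x y + d y z.
Proof. by move=> Sx Sy Sz; case: (dS Sx Sy Sz). Qed.

Lemma metric_on_eq0 x y : S x -> S y -> d x y = 0 -> x = y.
Proof. by move=> Sx Sy; case: (dS Sx Sy Sx). Qed.

Lemma metric_on_ge0 x y : S x -> S y -> 0 <= d x y.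
Proof.
move=> Sx Sy; have := metric_on_triangle Sx Sy Sx.
by rewrite metric_on_xx // (metric_onC Sy Sx); lra.
Qed.

Lemma metric_on_gt0 x y : S x -> S y -> x <> y -> 0 < d x y.
Proof.
move=> Sx Sy xy; rewrite lt_neqAle metric_on_ge0 // andbT.
by apply/eqP => /esym /(metric_on_eq0 Sx Sy).
Qed.

Lemma metric_on_eq_small x y : S x -> S y -> (forall e, 0 < e -> d x y < e) -> x = y.
Proof.
move=> Sx Sy small; apply: metric_on_eq0 => //; apply/le_anti.
rewrite metric_on_ge0 // andbT; apply/ler_addgt0Pr => e e0.
by rewrite add0r; apply/ltW/small.
Qed.

Lemma mopen_mball x e : S x -> mopen S d (mball S d x e).
Proof.
move=> Sx; split=> [y []//|y [Sy dxy]].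
exists (e - d x y) => [|z [Sz dyz]]; first lra.
by split=> //; have := metric_on_triangle Sx Sy Sz; lra.
Qed.

Lemma metric_mhausdorff : mhausdorff S d.
Proof.
move=> x y Sx Sy xy; have dxy := metric_on_gt0 Sx Sy xy.
exists (mball S d x (d x y / 2)), (mball S d y (d x y / 2)).
split; [exact: mopen_mball|exact: mopen_mball| | |].
- by split=> //; rewrite metric_on_xx //; lra.
- by split=> //; rewrite metric_on_xx //; lra.
apply/seteqP; split=> // z [[Sz dxz] [_ dyz]].
by have := metric_on_triangle Sx Sz Sy; rewrite (metric_onC Sz Sy); lra.
Qed.

Lemma lipschitz1_mcontinuous (Y : Type) (T : set Y) (e : Y -> Y -> R)
    (f : X -> Y) :
  (forall x, S x -> T (f x)) ->
  (forall x y, S x -> S y -> e (f x) (f y) <= d x y) ->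
  mcontinuous S d T e f.
Proof.
move=> fST lipf; split=> // x Sx eps eps0; exists eps => // y Sy dxy.
exact: le_lt_trans (lipf _ _ Sx Sy) dxy.
Qed.

Lemma cluster_point_le x u y eps : S x -> S y -> (forall n, S (u n)) ->
  (forall n, d x (u n) <= eps) -> cluster_point d u y -> d x y <= eps.
Proof.
move=> Sx Sy Su xu cy; apply/ler_addgt0Pr => e e0.
have [n _ dyn] := cy e e0 0%N.
have := metric_on_triangle Sx (Su n) Sy; have := xu n.
by rewrite (metric_onC (Su n) Sy); lra.
Qed.

Lemma mcompact_seq_compact K : mcompact S d K -> seq_compact d K.
Proof.
move=> [KS Kc] u Ku; apply: contrapT => nocluster.
have far y : K y -> exists e N, 0 < e /\
    forall n, (N <= n)%N -> e <= d y (u n).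
  move=> Ky; apply: contrapT => h; apply: nocluster; exists y => // e e0 N.
  apply: contrapT => h'; apply: h; exists e, N; split => // n Nn.
  by rewrite leNgt; apply/negP => dyn; apply: h'; exists n.
pose I := {p : X * R * nat | K p.1.1 /\ 0 < p.1.2 /\
    forall n, (p.2 <= n)%N -> p.1.2 <= d p.1.1 (u n)}.
pose F (i : I) := mball S d (sval i).1.1 (sval i).1.2.
have Fo i : mopen S d (F i) by apply: mopen_mball; apply: KS; case: (svalP i).
have KF : K `<=` \bigcup_i F i.
  move=> x Kx; have [e [N [e0 hN]]] := far x Kx.
  exists (exist _ (x, e, N) (conj Kx (conj e0 hN))) => //.
  by split; [exact: KS|rewrite /= metric_on_xx //; exact: KS].
have [D Dfin KD] := Kc I F Fo KF.
have [M hM] := finite_nat_ubound (finite_image (fun i : I => (sval i).2) Dfin).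
have [i Di [_ din]] := KD _ (Ku M).
have := (svalP i).2.2 M (hM _ (ex_intro2 _ _ i Di erefl)).
by rewrite leNgt din.
Qed.

Lemma seq_compact_lebesgue K (I : Type) (F : I -> set X) :
  K `<=` S -> seq_compact d K -> (forall i, mopen S d (F i)) ->
  K `<=` \bigcup_i F i ->
  exists2 del, 0 < del & forall x, K x -> exists i, mball S d x del `<=` F i.
Proof.
move=> KS cK Fo KF; apply: contrapT => nolebesgue.
have bad n : exists x, K x /\ forall i, ~ mball S d x n.+1%:R^-1 `<=` F i.
  apply: contrapT => h; apply: nolebesgue; exists n.+1%:R^-1 => [|x Kx].
    by rewrite invr_gt0 ltr0Sn.
  apply: contrapT => h'; apply: h; exists x; split => // i xi.
  by apply: h'; exists i.
have /choice [v hv] := bad; have /all_and2 [Kv vbad] := hv.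
have [y Ky cy] := cK v Kv.
have [j _ Fjy] := KF y Ky.
have [r r0 yFj] := (Fo j).2 y Fjy.
have r20 : 0 < r / 2 by lra.
have [N HN] := invSn_lt_eventually r20.
have [n Nn dyn] := cy (r / 2) r20 N.
apply: (vbad n j) => z [Sz dz]; apply: yFj; split => //.
have {}dz : d (v n) z < n.+1%:R^-1 := dz.
have := metric_on_triangle (KS _ Ky) (KS _ (Kv n)) Sz; have := HN n Nn.
by move: (n.+1%:R^-1) dz => w; lra.
Qed.

Lemma seq_compact_totally_bounded K del : K `<=` S -> seq_compact d K ->
  0 < del -> exists2 N, finite_set N &
    N `<=` K /\ forall x, K x -> exists2 y, N y & d y x < del.
Proof.
move=> KS cK del0; apply: contrapT => nonet.
have [x0 Kx0] : K !=set0.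
  apply: contrapT => K0; apply: nonet; exists set0 => //; split=> // x Kx.
  by exfalso; apply: K0; exists x.
have far N : exists x, finite_set N -> N `<=` K ->
    K x /\ forall y, N y -> del <= d y x.
  case: (pselect (finite_set N /\ N `<=` K)) => [[fN NK]|]; last first.
    by move=> h; exists x0 => fN NK; exfalso; apply: h.
  apply: contrapT => h; apply: nonet; exists N => //; split => // x Kx.
  apply: contrapT => h'; apply: h; exists x => _ _; split => // y Ny.
  by rewrite leNgt; apply/negP => dyx; apply: h'; exists y.
have /choice [next hnext] := far.
pose net := fix net n := if n is n'.+1 then net n' `|` [set next (net n')]
  else set0.
have netK n : finite_set (net n) /\ net n `<=` K.
  elim: n => [|n [fn nK]] /=; first by split; [exact: finite_set0|].
  rewrite finite_setU; split; first by split; [|exact: finite_set1].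
  by move=> x [/nK //|->]; exact: (hnext _ fn nK).1.
pose v n := next (net n).
have vK n : K (v n) by have [fn nK] := netK n; exact: (hnext _ fn nK).1.
have net_v k m : (k < m)%N -> net m (v k).
  elim: m => // m IH; rewrite ltnS leq_eqVlt => /orP [/eqP ->|km] /=.
    by right.
  by left; exact: IH.
have vfar k m : (k < m)%N -> del <= d (v k) (v m).
  by move=> km; have [fm mK] := netK m; apply: (hnext _ fm mK).2; exact: net_v.
have [y Ky cy] := cK v vK.
have del20 : 0 < del / 2 by lra.
have [a _ dya] := cy (del / 2) del20 0%N.
have [b ab dyb] := cy (del / 2) del20 a.+1.
have := vfar a b ab.
have := metric_on_triangle (KS _ (vK a)) (KS _ Ky) (KS _ (vK b)).
by rewrite (metric_onC (KS _ (vK a)) (KS _ Ky)); lra.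
Qed.

Lemma seq_compact_mcompact K : K `<=` S -> seq_compact d K -> mcompact S d K.
Proof.
move=> KS cK; split=> // I F Fo KF.
case: (pselect (K !=set0)) => [[x0 Kx0]|K0]; last first.
  by exists set0 => // x Kx; exfalso; apply: K0; exists x.
have [i0 _ _] := KF x0 Kx0.
have [del del0 lebesgue] := seq_compact_lebesgue KS cK Fo KF.
have [N fN [NK net]] := seq_compact_totally_bounded KS cK del0.
have idx y : exists i, N y -> mball S d y del `<=` F i.
  case: (pselect (N y)) => [/NK /lebesgue [i yi]|Ny]; first by exists i.
  by exists i0.
have /choice [f hf] := idx.
exists (f @` N); first exact: finite_image.
move=> x Kx; have [y Ny dyx] := net x Kx.
by exists (f y); [exists y|apply: hf => //; split => //; exact: KS].
Qed.

End MetricOnSubset.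

Section HausdorffDistance.
Variables (R : realType) (X : Type) (d : X -> X -> R).
Hypothesis dX : metric_on [set: X] d.

Let d_xx x : d x x = 0. Proof. exact: (metric_on_xx dX (I : setT x)). Qed.
Let d_sym x y : d x y = d y x.
Proof. exact: (metric_onC dX (I : setT x) (I : setT y)). Qed.
Let d_triangle x y z : d x z <= d x y + d y z.
Proof. exact: (metric_on_triangle dX (I : setT x) (I : setT y) (I : setT z)). Qed.

Definition hdist_radii (E F : set X) : set R :=
  [set eps | 0 < eps /\ F `<=` enlarge d E eps /\ E `<=` enlarge d F eps].

Lemma enlarge_le (A : set X) e e' : e <= e' -> enlarge d A e `<=` enlarge d A e'.
Proof. by move=> ee' x [y Ay dxy]; exists y => //; exact: lt_le_trans ee'. Qed.

Lemma hdist_radii_lb E F : has_lbound (hdist_radii E F).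
Proof. by exists 0 => e [/ltW]. Qed.

Lemma hdist_radiiC E F : hdist_radii E F = hdist_radii F E.
Proof. by apply/seteqP; split=> e [e0 [EF FE]]. Qed.

Lemma hdist_radiiD E F G a b : hdist_radii E F a -> hdist_radii F G b ->
  hdist_radii E G (a + b).
Proof.
move=> [a0 [FE EF]] [b0 [GF FG]]; split; first exact: addr_gt0.
split=> x.
  move=> /GF [y Fy dxy]; have [z Ez dyz] := FE y Fy; exists z => //.
  by have := d_triangle x y z; lra.
move=> /EF [y Fy dxy]; have [z Gz dyz] := FG y Fy; exists z => //.
by have := d_triangle x y z; lra.
Qed.

Lemma hdist_radii_neq0 E F : E !=set0 -> F !=set0 ->
  (exists M, forall x y, (E `|` F) x -> (E `|` F) y -> d x y <= M) ->
  hdist_radii E F !=set0.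
Proof.
move=> [x0 Ex0] [y0 Fy0] [M dM]; have M0 : 0 <= M.
  by have := dM x0 x0 (or_introl Ex0) (or_introl Ex0); rewrite d_xx.
exists (M + 1); split; first lra.
split=> x Ex; [exists x0 => //|exists y0 => //].
  by have := dM x x0 (or_intror Ex) (or_introl Ex0); lra.
by have := dM x y0 (or_introl Ex) (or_intror Fy0); lra.
Qed.

Lemma hdist_ge0 E F : 0 <= hdist d E F.
Proof.
case: (pselect (hdist_radii E F !=set0)) => [ne|].
  by apply: lb_le_inf => // x [/ltW].
move=> /set0P/negP/negPn/eqP E0.
by rewrite /hdist -/(hdist_radii E F) E0 inf0.
Qed.

Lemma hdist_le E F e : 0 < e -> F `<=` enlarge d E e ->
  E `<=` enlarge d F e -> hdist d E F <= e.
Proof.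
by move=> e0 FE EF; apply: ge_inf; [exact: hdist_radii_lb|split].
Qed.

Lemma hdist_lt_enlarge E F e : hdist_radii E F !=set0 -> hdist d E F < e ->
  F `<=` enlarge d E e /\ E `<=` enlarge d F e.
Proof.
move=> ne /(inf_lt ne) [t [_ [FE EF]] te].
by split=> x Ex; apply: (enlarge_le (ltW te)); [exact: FE|exact: EF].
Qed.

Lemma hdist_xx E : hdist d E E = 0.
Proof.
apply/le_anti; rewrite hdist_ge0 andbT; apply/ler_addgt0Pr => e e0.
by rewrite add0r; apply: hdist_le => // x Ex; exists x; rewrite ?d_xx.
Qed.

Lemma hdistC E F : hdist d E F = hdist d F E.
Proof. by rewrite /hdist -!/(hdist_radii _ _) hdist_radiiC. Qed.

Lemma hdist_triangle E F G : hdist_radii E F !=set0 -> hdist_radii F G !=set0 ->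
  hdist d E G <= hdist d E F + hdist d F G.
Proof.
move=> EF FG; apply/ler_addgt0Pr => e e0; have e20 : 0 < e / 2 by lra.
have [a EFa aE] := inf_adherent e20 (conj EF (hdist_radii_lb E F)).
have [b FGb bF] := inf_adherent e20 (conj FG (hdist_radii_lb F G)).
have [ab0 [GE EG]] := hdist_radiiD EFa FGb.
have := hdist_le ab0 GE EG; rewrite /hdist -!/(hdist_radii _ _) in aE bF *.
lra.
Qed.

Lemma hdist_image_le (f : X -> X) E F : (forall a b, d (f a) (f b) <= d a b) ->
  hdist_radii E F !=set0 -> hdist d (f @` E) (f @` F) <= hdist d E F.
Proof.
move=> lipf ne; apply: lb_le_inf => // e [e0 [FE EF]].
apply: hdist_le => // _ [x Ex <-].
  have [y Ey dxy] := FE x Ex; exists (f y); first by exists y.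
  exact: le_lt_trans (lipf _ _) dxy.
have [y Fy dxy] := EF x Ex; exists (f y); first by exists y.
exact: le_lt_trans (lipf _ _) dxy.
Qed.

End HausdorffDistance.

Lemma le_diam (R : realType) (X : Type) (d : X -> X -> R) (E : set X) a b :
  (exists M, forall x y, E x -> E y -> d x y <= M) -> E a -> E b ->
  d a b <= diam d E.
Proof.
move=> [M dM] Ea Eb; apply: ub_le_sup; last by exists (a, b).
by exists M => _ [[x y] [Ex Ey] <-]; apply: dM.
Qed.

Section MetrizedSpace.
Variables (R : realType) (G : ptopologicalType) (d : G -> G -> R).
Hypothesis hd : metrizes d.

Let dG : metric_on [set: G] d := proj1 hd.
Let d_xx x : d x x = 0. Proof. exact: (metric_on_xx dG (I : setT x)). Qed.
Let d_sym x y : d x y = d y x.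
Proof. exact: (metric_onC dG (I : setT x) (I : setT y)). Qed.
Let d_triangle x y z : d x z <= d x y + d y z.
Proof. exact: (metric_on_triangle dG (I : setT x) (I : setT y) (I : setT z)). Qed.
Let d_ge0 x y : 0 <= d x y.
Proof. exact: (metric_on_ge0 dG (I : setT x) (I : setT y)). Qed.

Lemma nbhs_metrizesP x A :
  nbhs x A <-> exists2 e, 0 < e & [set y | d x y < e] `<=` A.
Proof. by rewrite (proj2 hd x). Qed.

Lemma nbhs_dball x e : 0 < e -> nbhs x [set y | d x y < e].
Proof. by move=> e0; apply/nbhs_metrizesP; exists e. Qed.

Lemma open_dball x e : open [set y | d x y < e].
Proof.
rewrite openE => y dxy; apply/nbhs_metrizesP; exists (e - d x y) => [|z /= dyz].
  by rewrite subr_gt0.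
by have := d_triangle x y z; lra.
Qed.

Lemma closed_dist_mem (A : set G) y : closed A ->
  (forall r, 0 < r -> exists2 c, A c & d y c < r) -> A y.
Proof.
move=> cA near; apply: cA => B /nbhs_metrizesP [r r0 rB].
by have [c Ac dyc] := near r r0; exists c; split => //; exact: rB.
Qed.

Lemma continuous_dball_preimage (Y : topologicalType) (f : G -> Y) (U : set Y) x :
  continuous f -> open U -> U (f x) ->
  exists2 r, 0 < r & forall y, d x y < r -> U (f y).
Proof.
move=> cf oU Ufx; have : nbhs (f x) U by move: oU; rewrite openE; apply.
by move=> /cf /nbhs_metrizesP [r r0 rU]; exists r => // y /rU.
Qed.

Lemma eq_near_continuous (Y : topologicalType) (f : G -> Y) a b :
  continuous f -> hausdorff_space Y ->
  (forall r, 0 < r -> exists z w, [/\ d a z < r, d b w < r & f z = f w]) ->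
  f a = f b.
Proof.
move=> cf hY near; apply: hY => A B /cf nA /cf nB.
have /nbhs_metrizesP [ra ra0 raA] := nA; have /nbhs_metrizesP [rb rb0 rbB] := nB.
have r0 : 0 < Num.min ra rb by rewrite lt_min ra0 rb0.
have [z [w [dz dw fzw]]] := near _ r0.
move: dz dw; rewrite !lt_min => /andP [dz _] /andP [_ dw].
by exists (f z); split; [exact: raA|rewrite fzw; exact: rbB].
Qed.

(* Compactness applied to the filter generated by the tails
   [[set u n | n in [set n | (N <= n)%N /\ Q e n]]], for [e > 0]. *)
Lemma compact_cluster_along (K : set G) (u : nat -> G) (Q : R -> nat -> Prop) :
  compact K -> (forall e e' n, e <= e' -> Q e n -> Q e' n) ->
  (forall e, 0 < e -> forall N, exists2 n, (N <= n)%N & Q e n) ->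
  (exists2 e0, 0 < e0 & forall n, Q e0 n -> K (u n)) ->
  exists2 y, K y & forall e r N, 0 < e -> 0 < r ->
    exists n, [/\ (N <= n)%N, Q e n & d y (u n) < r].
Proof.
move=> cK Qmono Qfreq [e0 e00 QK].
pose D := [set p : R * nat | 0 < p.1].
pose B (p : R * nat) := [set u n | n in [set n | (p.2 <= n)%N /\ Q p.1 n]].
have FF : Filter (filter_from D B).
  apply: filter_from_filter; first by exists (1, 0%N); rewrite /D /= ltr01.
  move=> [e1 N1] [e2 N2]; rewrite /D /= => e10 e20.
  exists (Num.min e1 e2, maxn N1 N2); first by rewrite /D /= lt_min e10 e20.
  move=> _ [n [Nn Qn] <-]; rewrite geq_max in Nn; case/andP: Nn => N1n N2n.
  split; exists n => //; split => //=; apply: Qmono Qn; rewrite ge_min lexx //.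
  by rewrite orbT.
have PF : ProperFilter (filter_from D B).
  apply: filter_from_proper => // -[e N]; rewrite /D /= => e1.
  by have [n Nn Qn] := Qfreq e e1 N; exists (u n); exists n.
have FK : filter_from D B K by exists (e0, 0%N) => // _ [n [_ Qn] <-]; exact: QK.
have [y [Ky cy]] := cK _ PF FK.
exists y => // e r N e1 r0.
have [z [[n [Nn Qn] <-] dz]] := cy (B (e, N)) [set z | d y z < r]
  (ex_intro2 _ _ (e, N) e1 (fun _ h => h)) (nbhs_dball y r0).
by exists n.
Qed.

Lemma compact_seq_compact K : compact K -> seq_compact d K.
Proof.
move=> cK u Ku.
have [y Ky cy] := @compact_cluster_along K u (fun _ _ => True) cK
  (fun _ _ _ _ _ => I) (fun e _ N => ex_intro2 _ _ N (leqnn N) I)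
  (ex_intro2 _ _ 1 ltr01 (fun n _ => Ku n)).
by exists y => // r r0 N; have [n [Nn _ dyn]] := cy 1 r N ltr01 r0; exists n.
Qed.

Lemma compact_joint_cluster (K1 K2 : set G) (u v : nat -> G) :
  compact K1 -> compact K2 -> (forall n, K1 (u n)) -> (forall n, K2 (v n)) ->
  exists a b, [/\ K1 a, K2 b & forall r N, 0 < r ->
    exists n, [/\ (N <= n)%N, d a (u n) < r & d b (v n) < r]].
Proof.
move=> cK1 cK2 K1u K2v.
have [a K1a cu] := compact_seq_compact cK1 K1u.
have [b K2b cv] := @compact_cluster_along K2 v (fun e n => d a (u n) < e) cK2
  (fun e e' n ee' h => lt_le_trans h ee') (fun e e0 N => cu e e0 N)
  (ex_intro2 _ _ 1 ltr01 (fun n _ => K2v n)).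
by exists a, b; split => // r N r0; have [n [Nn ? ?]] := cv r r N r0 r0; exists n.
Qed.

Lemma compact_dist_bounded (K : set G) : compact K ->
  exists M, forall x y, K x -> K y -> d x y <= M.
Proof.
move=> cK; case: (pselect (K !=set0)) => [[c Kc]|K0]; last first.
  by exists 0 => x y Kx; exfalso; apply: K0; exists x.
suff [M cM] : exists M, forall x, K x -> d c x <= M.
  exists (M + M) => x y Kx Ky; apply: le_trans (d_triangle x c y) _.
  by rewrite d_sym; apply: lerD; apply: cM.
apply: contrapT => unbounded.
have far n : exists x, K x /\ n%:R < d c x.
  apply: contrapT => h; apply: unbounded; exists n%:R => x Kx.
  by rewrite leNgt; apply/negP => cx; apply: h; exists x.
have /choice [v hv] := far; have /all_and2 [Kv cv] := hv.
have [y Ky cy] := compact_seq_compact cK Kv.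
have y0 : 0 <= d c y + 1 by apply: addr_ge0.
have [n Nn dyn] := cy 1 ltr01 (Num.Def.archi_bound (d c y + 1)).
have := archi_boundP y0; have := cv n; have := d_triangle c y (v n).
have : (Num.Def.archi_bound (d c y + 1))%:R <= n%:R :> R by rewrite ler_nat.
lra.
Qed.

(* Each point has a compact neighbourhood containing a ball of radius 2 r_x;
   a finite subcover of [C] by the balls of radius r_x gives [e] (the least
   r_x) and [K] (the union of the neighbourhoods). *)
Lemma compact_enlarge (C : set G) : locally_compact [set: G] -> compact C ->
  exists2 e, 0 < e & exists2 K, compact K & enlarge d C e `<=` K.
Proof.
move=> lcG cC.
have nb x : exists rU : R * set G, [/\ 0 < rU.1, compact rU.2 &
    [set y | d x y < rU.1 + rU.1] `<=` rU.2].
  have [U /nbhs_metrizesP [e e0 eU] [cU _]] := lcG x I.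
  by exists (e / 2, U); split => //= [|y dxy]; [lra|apply: eU; move: dxy => /=; lra].
have /choice [rU hrU] := nb; have /all_and3 [r0 cU rU2] := hrU.
have CU : C `<=` \bigcup_(x in C) [set y | d x y < (rU x).1].
  by move=> c Cc; exists c => //=; rewrite d_xx.
have cC' : cover_compact C by rewrite -compact_cover.
have [D _ CD] := cC' G C _ (fun x _ => open_dball x _) CU.
have [e [e0 [K [cK DK]]]] : exists e, 0 < e /\ exists K, compact K /\
    forall x, x \in finmap.enum_fset D -> e <= (rU x).1 /\ (rU x).2 `<=` K.
  elim: (finmap.enum_fset D) => [|a s [e [e0 [K [cK sK]]]]].
    by exists 1; split; [exact: ltr01|exists set0; split; [exact: compact0|]].
  exists (Num.min e (rU a).1); split; first by rewrite lt_min e0 r0.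
  exists ((rU a).2 `|` K); split; first exact: compactU.
  move=> x; rewrite inE => /orP [/eqP ->|xs]; first by rewrite ge_min lexx orbT.
  by have [ex UK] := sK x xs; rewrite ge_min ex; split => // y /UK; right.
exists e => //; exists K => // y [c Cc dyc].
have [x Dx /= dxc] := CD c Cc; have [ex UK] := DK x Dx.
by apply/UK/rU2 => /=; have := d_triangle x c y; rewrite (d_sym c y); lra.
Qed.

Lemma mul_dist_continuous (Γ : groupoid G) :
  {within composable_pairs Γ, continuous (fun p => g_mul Γ p.1 p.2)} ->
  forall x y, composable Γ x y -> forall e, 0 < e -> exists2 del, 0 < del &
    forall x' y', composable Γ x' y' -> d x x' < del -> d y y' < del ->
      d (g_mul Γ x y) (g_mul Γ x' y') < e.
Proof.
rewrite continuous_subspace_in => cm x y cxy e e0.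
have := cm (x, y) (mem_set cxy) _ (nbhs_dball (g_mul Γ x y) e0).
move/(@nbhs_subspace_ex _ (composable_pairs Γ) _ (x, y) cxy).
move=> [V [[P Q] [nP nQ] PQV] Ve].
have /nbhs_metrizesP [r1 r10 r1P] := nP; have /nbhs_metrizesP [r2 r20 r2Q] := nQ.
exists (Num.min r1 r2) => [|x' y' cxy']; first by rewrite lt_min r10 r20.
rewrite !lt_min => /andP [dx _] /andP [_ dy].
have : (V `&` composable_pairs Γ) (x', y') by split=> //; apply: PQV; split;
  [exact: r1P|exact: r2Q].
by rewrite -Ve => -[].
Qed.

End MetrizedSpace.

Section GroupoidAlgebra.
Variables (X : Type) (Γ : groupoid X).
Hypothesis hΓ : is_groupoid Γ.
Local Notation r := (g_r Γ).
Local Notation s := (g_s Γ).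
Local Notation m := (g_mul Γ).
Local Notation i := (g_inv Γ).

Lemma unit_r x : g_unit Γ (r x). Proof. by case: hΓ => h _; case: (h x). Qed.
Lemma unit_s x : g_unit Γ (s x). Proof. by case: hΓ => h _; case: (h x). Qed.
Lemma r_unit u : g_unit Γ u -> r u = u. Proof. by case: hΓ => _ [h _] /h []. Qed.
Lemma s_unit u : g_unit Γ u -> s u = u. Proof. by case: hΓ => _ [h _] /h []. Qed.

Lemma r_mul x y : composable Γ x y -> r (m x y) = r x.
Proof. by case: hΓ => _ [_ [h _]] /h []. Qed.

Lemma gmulA x y z : composable Γ x y -> composable Γ y z ->
  m (m x y) z = m x (m y z).
Proof. by case: hΓ => _ [_ [_ [h _]]]; apply: h. Qed.

Lemma gmul_rg x : m (r x) x = x.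
Proof. by case: hΓ => _ [_ [_ [_ [h _]]]]; case: (h x). Qed.

Lemma gmul_gs x : m x (s x) = x.
Proof. by case: hΓ => _ [_ [_ [_ [h _]]]]; case: (h x). Qed.

Lemma r_inv x : r (i x) = s x.
Proof. by case: hΓ => _ [_ [_ [_ [_ h]]]]; case: (h x). Qed.

Lemma s_inv x : s (i x) = r x.
Proof. by case: hΓ => _ [_ [_ [_ [_ h]]]]; case: (h x). Qed.

Lemma gmulgV x : m x (i x) = r x.
Proof. by case: hΓ => _ [_ [_ [_ [_ h]]]]; case: (h x). Qed.

Lemma gmulVg x : m (i x) x = s x.
Proof. by case: hΓ => _ [_ [_ [_ [_ h]]]]; case: (h x). Qed.

Lemma composable_r x : composable Γ (r x) x.
Proof. by rewrite /composable s_unit //; exact: unit_r. Qed.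

Lemma gmul_lcancel x y z : composable Γ x y -> composable Γ x z ->
  m x y = m x z -> y = z.
Proof.
move=> cxy cxz e; have cix : composable Γ (i x) x by rewrite /composable s_inv.
have iy : m (i x) (m x y) = y by rewrite -gmulA // gmulVg cxy gmul_rg.
have iz : m (i x) (m x z) = z by rewrite -gmulA // gmulVg cxz gmul_rg.
by rewrite -iy e iz.
Qed.

Lemma ginvK x : i (i x) = x.
Proof.
apply: (@gmul_lcancel (i x)); rewrite /composable ?r_inv ?s_inv //.
by rewrite gmulgV gmulVg r_inv.
Qed.

Lemma unit_of_idem e : composable Γ e e -> m e e = e -> g_unit Γ e.
Proof.
move=> cee eee; suff -> : e = s e by exact: unit_s.
apply: (@gmul_lcancel e) => //; last by rewrite eee gmul_gs.
by rewrite /composable r_unit //; exact: unit_s.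
Qed.

End GroupoidAlgebra.

Section GroupoidMorphism.
Variables (X Y : Type) (Γ : groupoid X) (Γ' : groupoid Y) (pi : X -> Y).
Hypothesis hΓ : is_groupoid Γ.
Hypothesis hΓ' : is_groupoid Γ'.
Hypothesis pi_morph : groupoid_morphism_on Γ Γ' setT pi.
Hypothesis pi_inj : forall a b, g_r Γ a = g_r Γ b -> pi a = pi b -> a = b.
Hypothesis pi_lift : forall u, g_unit Γ u -> forall y, g_r Γ' y = pi u ->
  exists b, g_r Γ b = u /\ pi b = y.
Local Notation r := (g_r Γ).
Local Notation s := (g_s Γ).
Local Notation m := (g_mul Γ).
Local Notation i := (g_inv Γ).
Local Notation r' := (g_r Γ').
Local Notation s' := (g_s Γ').
Local Notation m' := (g_mul Γ').
Local Notation i' := (g_inv Γ').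

Lemma morph_composable a b : composable Γ a b -> composable Γ' (pi a) (pi b).
Proof. by move=> cab; case: (pi_morph I I cab). Qed.

Lemma morph_gmul a b : composable Γ a b -> pi (m a b) = m' (pi a) (pi b).
Proof. by move=> cab; case: (pi_morph I I cab). Qed.

Lemma morph_unit u : g_unit Γ u -> g_unit Γ' (pi u).
Proof.
move=> uu; have cuu : composable Γ u u by rewrite /composable s_unit ?r_unit.
apply: (unit_of_idem hΓ'); first exact: morph_composable.
by rewrite -morph_gmul // -{3}(gmul_rg hΓ u) r_unit.
Qed.

Lemma morph_r x : pi (r x) = r' (pi x).
Proof.
have crx := composable_r hΓ x.
have -> : r' (pi x) = r' (m' (pi (r x)) (pi x)) by rewrite -morph_gmul ?gmul_rg.
rewrite (r_mul hΓ') ?(r_unit hΓ') //; last exact: morph_composable.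
exact/morph_unit/unit_r.
Qed.

Lemma morph_inv x : pi (i x) = i' (pi x).
Proof.
have cx : composable Γ x (i x) by rewrite /composable r_inv.
apply: (@gmul_lcancel _ _ hΓ' (pi x)); first exact: morph_composable.
  by rewrite /composable r_inv.
by rewrite -morph_gmul // !gmulgV // morph_r.
Qed.

Lemma morph_s x : pi (s x) = s' (pi x).
Proof. by rewrite -(r_inv hΓ) morph_r morph_inv r_inv. Qed.

Lemma unit_of_morph_unit w : g_unit Γ' (pi w) -> g_unit Γ w.
Proof.
move=> uw; suff <- : r w = w by exact: unit_r.
by apply: pi_inj; rewrite ?morph_r r_unit //; exact: unit_r.
Qed.

Lemma pfiber_r y : pfiber pi (r' y) = r @` pfiber pi y.
Proof.
apply/seteqP; split=> [w /= pw|_ [x px <-]]; last by rewrite /pfiber /= morph_r px.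
have uw : g_unit Γ w by apply: unit_of_morph_unit; rewrite pw; exact: unit_r.
by have [b [rb pb]] := pi_lift uw (esym pw); exists b.
Qed.

Lemma pfiber_inv y : pfiber pi (i' y) = i @` pfiber pi y.
Proof.
apply/seteqP; split=> [z /= pz|_ [x px <-]]; last by rewrite /pfiber /= morph_inv px.
by exists (i z); rewrite ?ginvK // /pfiber /= morph_inv pz ginvK.
Qed.

Lemma pfiber_s y : pfiber pi (s' y) = s @` pfiber pi y.
Proof.
apply/seteqP; split=> [w|_ [x px <-]]; last by rewrite /pfiber /= morph_s px.
rewrite -(r_inv hΓ') pfiber_r pfiber_inv => -[_ [x px <-] <-].
by exists x; rewrite ?r_inv.
Qed.

Lemma pfiber_mul x y c : composable Γ' x y -> pi c = m' x y ->
  exists a b, [/\ pi a = x, pi b = y, composable Γ a b & c = m a b].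
Proof.
move=> cxy pc.
have xrc : r' x = pi (r c) by rewrite morph_r pc (r_mul hΓ').
have [a [ra pa]] := pi_lift (unit_r hΓ c) xrc.
have cac : composable Γ (i a) c by rewrite /composable (s_inv hΓ) ra.
exists a, (m (i a) c); split => //.
- rewrite morph_gmul // morph_inv pa pc -(gmulA hΓ') //;
    last by rewrite /composable s_inv.
  by rewrite (gmulVg hΓ') cxy (gmul_rg hΓ').
- by rewrite /composable (r_mul hΓ) // r_inv.
- by rewrite -(gmulA hΓ) ?(gmulgV hΓ) ?ra ?(gmul_rg hΓ) // /composable r_inv.
Qed.

Lemma Hprime_r y : Hprime pi y -> Hprime pi (r' y).
Proof.
move=> [x1 [x2 [px1 px2 x12]]]; exists (r x1), (r x2).
split; rewrite ?morph_r ?px1 ?px2 // => rx12; apply: x12.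
by apply: pi_inj; rewrite ?px1 ?px2.
Qed.

Lemma Hprime_inv y : Hprime pi y -> Hprime pi (i' y).
Proof.
move=> [x1 [x2 [px1 px2 x12]]]; exists (i x1), (i x2).
split; rewrite ?morph_inv ?px1 ?px2 // => ix12; apply: x12.
by rewrite -(ginvK hΓ x1) ix12 ginvK.
Qed.

Lemma Hprime_s y : Hprime pi y -> Hprime pi (s' y).
Proof. by move=> Hy; rewrite -(r_inv hΓ'); apply/Hprime_r/Hprime_inv. Qed.

Lemma Hprime_mul x y : Hprime pi x -> composable Γ' x y -> Hprime pi (m' x y).
Proof.
move=> [x1 [x2 [px1 px2 x12]]] cxy.
have y1 : r' y = pi (s x1) by rewrite -cxy morph_s px1.
have y2 : r' y = pi (s x2) by rewrite -cxy morph_s px2.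
have [b1 [rb1 pb1]] := pi_lift (unit_s hΓ x1) y1.
have [b2 [rb2 pb2]] := pi_lift (unit_s hΓ x2) y2.
have cb1 : composable Γ x1 b1 by rewrite /composable rb1.
have cb2 : composable Γ x2 b2 by rewrite /composable rb2.
exists (m x1 b1), (m x2 b2); split; rewrite ?morph_gmul ?px1 ?px2 ?pb1 ?pb2 //.
move=> e12; apply: x12; apply: pi_inj; last by rewrite px1 px2.
by rewrite -(r_mul hΓ cb1) e12 r_mul.
Qed.

End GroupoidMorphism.

Section FibreMetrics.
Variables (R : realType) (G G' : ptopologicalType) (Γ : groupoid G)
  (Γ' : groupoid G') (d : G -> G -> R) (pi : G -> G').
Hypothesis hΓ : is_groupoid Γ.
Hypothesis hΓ' : is_groupoid Γ'.
Hypothesis G_hausdorff : hausdorff_space G.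
Hypothesis G'_hausdorff : hausdorff_space G'.
Hypothesis G_lc : locally_compact [set: G].
Hypothesis mul_cont :
  {within composable_pairs Γ, continuous (fun p => g_mul Γ p.1 p.2)}.
Hypothesis hd : metrizes d.
Hypothesis d_inv : forall x y, d (g_inv Γ x) (g_inv Γ y) = d x y.
Hypothesis d_r : forall x y, d (g_r Γ x) (g_r Γ y) <= d x y.
Hypothesis d_s : forall x y, d (g_s Γ x) (g_s Γ y) <= d x y.
Hypothesis pi_cont : continuous pi.
Hypothesis pi_proper : proper_map pi.
Hypothesis pi_morph : groupoid_morphism_on Γ Γ' setT pi.
Hypothesis pi_inj : forall a b, g_r Γ a = g_r Γ b -> pi a = pi b -> a = b.
Hypothesis pi_lift : forall u, g_unit Γ u -> forall y, g_r Γ' y = pi u ->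
  exists b, g_r Γ b = u /\ pi b = y.
Hypothesis pi_regular : regular_map d pi.

Local Notation r := (g_r Γ).
Local Notation s := (g_s Γ).
Local Notation m := (g_mul Γ).
Local Notation i := (g_inv Γ).
Local Notation r' := (g_r Γ').
Local Notation s' := (g_s Γ').
Local Notation m' := (g_mul Γ').
Local Notation i' := (g_inv Γ').
Local Notation fib := (pfiber pi).
Local Notation H' := (Hprime pi).
Local Notation H := (pi @^-1` Hprime pi).
Local Notation dH' := (dHprime d pi).
Local Notation dH := (dH d pi).

Let dG : metric_on [set: G] d := proj1 hd.
Let d_xx x : d x x = 0. Proof. exact: (metric_on_xx dG (I : setT x)). Qed.
Let d_sym x y : d x y = d y x.
Proof. exact: (metric_onC dG (I : setT x) (I : setT y)). Qed.
Let d_triangle x y z : d x z <= d x y + d y z.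
Proof. exact: (metric_on_triangle dG (I : setT x) (I : setT y) (I : setT z)). Qed.
Let d_ge0 x y : 0 <= d x y.
Proof. exact: (metric_on_ge0 dG (I : setT x) (I : setT y)). Qed.
Let d_small_eq x y : (forall e, 0 < e -> d x y < e) -> x = y.
Proof. exact: (metric_on_eq_small dG (I : setT x) (I : setT y)). Qed.
Let d_inv_le x y : d (i x) (i y) <= d x y. Proof. by rewrite d_inv. Qed.

Let pi_composable := morph_composable pi_morph.
Let pi_gmulE := morph_gmul pi_morph.
Let pi_rE := morph_r hΓ hΓ' pi_morph.
Let pi_sE := morph_s hΓ hΓ' pi_morph.
Let pi_invE := morph_inv hΓ hΓ' pi_morph.
Let fib_r := pfiber_r hΓ hΓ' pi_morph pi_inj pi_lift.
Let fib_s := pfiber_s hΓ hΓ' pi_morph pi_inj pi_lift.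
Let fib_inv := pfiber_inv hΓ hΓ' pi_morph.
Let fib_mul := pfiber_mul hΓ hΓ' pi_morph pi_lift.
Let H'_r := Hprime_r hΓ hΓ' pi_morph pi_inj.
Let H'_s := Hprime_s hΓ hΓ' pi_morph pi_inj.
Let H'_inv := Hprime_inv hΓ hΓ' pi_morph.
Let H'_mul := Hprime_mul hΓ hΓ' pi_morph pi_inj pi_lift.

Lemma pfiber_compact y : compact (fib y).
Proof. exact: (pi_proper (@compact_set1 G' y)). Qed.

Lemma pfiber_closed y : closed (fib y).
Proof. by apply: compact_closed => //; exact: pfiber_compact. Qed.

Lemma Hprime_pfiber_neq0 y : H' y -> fib y !=set0.
Proof. by move=> [x1 [_ [px1 _ _]]]; exists x1. Qed.

Lemma pfiber_hdist_radii_neq0 x y : fib x !=set0 -> fib y !=set0 ->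
  hdist_radii d (fib x) (fib y) !=set0.
Proof.
move=> nx ny; apply: hdist_radii_neq0 => //.
have [M dM] :=
  compact_dist_bounded hd (compactU (@pfiber_compact x) (@pfiber_compact y)).
by exists M.
Qed.

Lemma Hprime_hdist_radii_neq0 x y : H' x -> H' y ->
  hdist_radii d (fib x) (fib y) !=set0.
Proof.
move=> /Hprime_pfiber_neq0 nx /Hprime_pfiber_neq0 ny.
exact: pfiber_hdist_radii_neq0.
Qed.

Lemma dHprime_lt_enlarge x y e : H' x -> H' y -> dH' x y < e ->
  fib y `<=` enlarge d (fib x) e /\ fib x `<=` enlarge d (fib y) e.
Proof. by move=> Hx Hy; apply: hdist_lt_enlarge; exact: Hprime_hdist_radii_neq0. Qed.

Lemma dHprime_metric : metric_on H' dH'.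
Proof.
move=> x y z Hx Hy Hz; split.
- exact: hdist_xx dG _.
- move=> dxy0; have [b yb] := Hprime_pfiber_neq0 Hy.
  suff xb : fib x b by rewrite -xb.
  apply: (closed_dist_mem hd (@pfiber_closed x)) => e e0.
  have dxy : dH' x y < e by rewrite dxy0.
  by have [near _] := dHprime_lt_enlarge Hx Hy dxy; exact: near.
- exact: hdistC.
- by apply: (hdist_triangle dG); exact: Hprime_hdist_radii_neq0.
Qed.

Lemma dH_ge_d x y : d x y <= dH x y.
Proof. by rewrite /Defs.dH lerDl; exact: hdist_ge0. Qed.

Lemma dH_ge_dHprime x y : dH' (pi x) (pi y) <= dH x y.
Proof. by rewrite /Defs.dH lerDr. Qed.

Lemma dH_metric : metric_on H dH.
Proof.
move=> x y z Hx Hy Hz.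
have [dH'xx _ dH'C dH'tri] := dHprime_metric Hx Hy Hz.
rewrite /Defs.dH; split.
- by rewrite d_xx dH'xx addr0.
- move=> dxy0; apply: d_small_eq => e e0.
  by have := dH_ge_d x y; rewrite /Defs.dH dxy0; lra.
- by rewrite d_sym dH'C.
- by have := d_triangle x y z; lra.
Qed.

Lemma mcontinuous_fibrewise (f : G -> G) (f' : G' -> G') :
  (forall x, pi (f x) = f' (pi x)) -> (forall y, H' y -> H' (f' y)) ->
  (forall y, fib (f' y) = f @` fib y) -> (forall a b, d (f a) (f b) <= d a b) ->
  mcontinuous H dH H dH f /\ mcontinuous H' dH' H' dH' f'.
Proof.
move=> pif Hf' fibf lipf.
have lip' x y : H' x -> H' y -> dH' (f' x) (f' y) <= dH' x y.
  move=> Hx Hy; rewrite /dHprime !fibf.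
  exact: hdist_image_le lipf (Hprime_hdist_radii_neq0 Hx Hy).
split; apply: lipschitz1_mcontinuous => //.
- by move=> x Hx; rewrite /preimage /= pif; exact: Hf'.
- by move=> x y Hx Hy; rewrite /Defs.dH !pif; apply: lerD => //; exact: lip'.
Qed.

Lemma regular_cluster (u : nat -> G') (v : nat -> G) a c : 0 < c ->
  H' (pi a) -> (forall n, pi (v n) = u n) ->
  (forall n, exists2 w, fib (u n) w & c < d (v n) w) ->
  cluster_point d v a -> cluster_point dH' u (pi a).
Proof.
move=> c0 Ha pv far cva eta eta0 N.
have mc0 : 0 < Num.min eta c by rewrite lt_min eta0 c0.
have [U [oU Ua regU]] := pi_regular Ha mc0.
have [e e0 eU] := continuous_dball_preimage hd pi_cont oU Ua.
have [n Nn dan] := cva e e0 N.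
exists n => //; have [w fw cw] := far n.
case: (regU (u n)); first by rewrite -pv; exact: eU.
  by move=> lt_min; apply: lt_le_trans lt_min _; rewrite ge_min lexx.
move=> small_diam; exfalso.
have := le_diam (compact_dist_bounded hd (@pfiber_compact (u n))) (pv n) fw.
have : Num.min eta c <= c by rewrite ge_min lexx orbT.
lra.
Qed.

Lemma Hprime_cluster_of_far_pairs (K : set G) (a_ b_ : nat -> G) c :
  compact K -> 0 < c -> (forall n, K (a_ n)) -> (forall n, K (b_ n)) ->
  (forall n, pi (a_ n) = pi (b_ n)) -> (forall n, c < d (a_ n) (b_ n)) ->
  exists2 a, H' (pi a) & cluster_point d a_ a.
Proof.
move=> cK c0 Ka Kb pab cab.
have [a [b [_ _ ab]]] := compact_joint_cluster hd cK cK Ka Kb.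
exists a; last by move=> e e0 N; have [n [Nn da _]] := ab e N e0; exists n.
exists a, b; split=> //.
  apply/esym/(eq_near_continuous hd pi_cont G'_hausdorff) => e e0.
  by have [n [_ da db]] := ab e 0%N e0; exists (a_ n), (b_ n).
move=> ba; rewrite -ba in ab; have c20 : 0 < c / 2 by lra.
have [n [_ da db]] := ab (c / 2) 0%N c20.
by have := cab n; have := d_triangle (a_ n) a (b_ n); rewrite (d_sym (a_ n) a); lra.
Qed.

(* [eps <= d x1 x2 / 8] keeps the pairs lifted from [x1], [x2] more than
   [d x1 x2 / 2] apart, and [eps <= e0 / 2] keeps them in the compact [K]. *)
Lemma Hprime_locally_seq_compact x : H' x ->
  exists2 eps, 0 < eps & seq_compact dH' [set y | H' y /\ dH' x y <= eps].
Proof.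
move=> Hx; have [x1 [x2 [px1 px2 x12]]] := Hx.
have D0 : 0 < d x1 x2 := metric_on_gt0 dG (I : setT x1) (I : setT x2) x12.
have [e0 e00 [K cK xK]] := compact_enlarge hd G_lc (@pfiber_compact x).
pose eps := Num.min (e0 / 2) (d x1 x2 / 8).
have eps_e0 : eps <= e0 / 2 by rewrite ge_min lexx.
have eps_D : eps <= d x1 x2 / 8 by rewrite ge_min lexx orbT.
have eps0 : 0 < eps by rewrite lt_min; apply/andP; split; lra.
exists eps => // u Bu.
have pair n : exists ab : G * G, [/\ pi ab.1 = u n, pi ab.2 = u n,
    d x1 ab.1 < eps + eps & d x2 ab.2 < eps + eps].
  have [Hun dun] := Bu n; have dun' : dH' x (u n) < eps + eps by lra.
  have [_ near] := dHprime_lt_enlarge Hx Hun dun'.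
  have [a pa da] := near x1 px1; have [b pb db] := near x2 px2.
  by exists (a, b).
have /choice [ab hab] := pair; have /all_and4 [pa pb da db] := hab.
have Ka n : K (ab n).1.
  by apply: xK; exists x1 => //; rewrite d_sym; have := da n; lra.
have Kb n : K (ab n).2.
  by apply: xK; exists x2 => //; rewrite d_sym; have := db n; lra.
have far n : d x1 x2 / 2 < d (ab n).1 (ab n).2.
  have := d_triangle x1 (ab n).1 x2; have := d_triangle (ab n).1 (ab n).2 x2.
  by rewrite (d_sym (ab n).2 x2); have := da n; have := db n; lra.
have D20 : 0 < d x1 x2 / 2 by lra.
have [a Ha ca] := Hprime_cluster_of_far_pairs cK D20 Ka Kb
  (fun n => etrans (pa n) (esym (pb n))) far.
have cu : cluster_point dH' u (pi a).
  by apply: regular_cluster D20 Ha pa _ ca => n; exists (ab n).2; [exact: pb|].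
exists (pi a) => //; split => //.
exact: (cluster_point_le dHprime_metric) Hx Ha (fun n => (Bu n).1)
  (fun n => (Bu n).2) cu.
Qed.

Lemma lift_cluster (u : nat -> G) y : H' y -> cluster_point dH' (pi \o u) y ->
  exists2 z, pi z = y & cluster_point dH u z.
Proof.
move=> Hy cu.
have [e0 e00 [K cK yK]] := compact_enlarge hd G_lc (@pfiber_compact y).
have near n e : dH' y (pi (u n)) < e -> exists2 c, fib y c & d (u n) c < e.
  move=> lt_e; have radii := pfiber_hdist_radii_neq0
    (Hprime_pfiber_neq0 Hy) (ex_intro _ (u n) erefl).
  by have [/(_ (u n) erefl)] := hdist_lt_enlarge radii lt_e.
have uK : exists2 e, 0 < e & forall n, dH' y (pi (u n)) < e -> K (u n).
  by exists e0 => // n /near [c yc dc]; apply: yK; exists c.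
have [z Kz cz] := compact_cluster_along hd (Q := fun e n => dH' y (pi (u n)) < e)
  cK (fun e e' n ee' lt_e => lt_le_trans lt_e ee') (fun e e0 N => cu e e0 N) uK.
have yz : fib y z.
  apply: (closed_dist_mem hd (@pfiber_closed y)) => e e_gt0.
  have e20 : 0 < e / 2 by lra.
  have [n [_ lt_e dzn]] := cz (e / 2) (e / 2) 0%N e20 e20.
  have [c yc dc] := near n _ lt_e.
  by exists c => //; have := d_triangle z (u n) c; lra.
exists z => // eta eta0 N; have eta20 : 0 < eta / 2 by lra.
have [n [Nn lt_eta dzn]] := cz (eta / 2) (eta / 2) N eta20 eta20.
by exists n => //; rewrite /Defs.dH yz; lra.
Qed.

Lemma Hprime_mlocally_compact : mlocally_compact H' dH'.
Proof.
move=> x Hx; have [eps eps0 cB] := Hprime_locally_seq_compact Hx.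
exists [set y | H' y /\ dH' x y <= eps].
  by apply: (seq_compact_mcompact dHprime_metric) => // y [].
by exists eps => // y [Hy dy]; split=> //; exact: ltW.
Qed.

Lemma H_mlocally_compact : mlocally_compact H dH.
Proof.
move=> x Hx; have [eps eps0 cB] := Hprime_locally_seq_compact Hx.
exists [set y | H y /\ dH' (pi x) (pi y) <= eps]; last first.
  exists eps => // y [Hy dy]; split=> //.
  exact/ltW/(le_lt_trans (dH_ge_dHprime x y)).
apply: (seq_compact_mcompact dH_metric) => [y []//|u Bu].
have [y [Hy dy] cy] := cB (pi \o u) Bu.
have [z pz cz] := lift_cluster Hy cy.
by exists z => //; rewrite /= /preimage /= pz.
Qed.

Lemma pfiber_r_uniform y g : 0 < g -> exists2 del, 0 < del &
  forall b b', fib y b -> fib y b' -> d (r b) (r b') < del -> d b b' < g.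
Proof.
move=> g0; apply: contrapT => nonunif.
have bad n : exists bb : G * G, [/\ fib y bb.1, fib y bb.2,
    d (r bb.1) (r bb.2) < n.+1%:R^-1 & g <= d bb.1 bb.2].
  apply: contrapT => h; apply: nonunif; exists n.+1%:R^-1 => [|b b' yb yb' dr].
    by rewrite invr_gt0 ltr0Sn.
  by rewrite ltNge; apply/negP => gb; apply: h; exists (b, b').
have /choice [bb hbb] := bad; have /all_and4 [yb1 yb2 dr far] := hbb.
have [b [b' [yb yb' cb]]] :=
  compact_joint_cluster hd (@pfiber_compact y) (@pfiber_compact y) yb1 yb2.
have rbb' : r b = r b'.
  apply: d_small_eq => e e0; have e30 : 0 < e / 3 by lra.
  have [N HN] := invSn_lt_eventually e30.
  have [n [Nn db db']] := cb (e / 3) N e30.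
  have := d_triangle (r b) (r (bb n).1) (r b').
  have := d_triangle (r (bb n).1) (r (bb n).2) (r b').
  have := d_r b (bb n).1; have := d_r (bb n).2 b'; rewrite (d_sym (bb n).2 b').
  by have := HN n Nn; move: (n.+1%:R^-1) (dr n) => w; lra.
have bb' : b = b' by apply: pi_inj; rewrite // yb yb'.
rewrite -bb' in cb; have g20 : 0 < g / 2 by lra.
have [n [_ db db']] := cb (g / 2) 0%N g20.
have := far n; have := d_triangle (bb n).1 b (bb n).2.
by rewrite (d_sym (bb n).1 b); lra.
Qed.

Lemma pfiber_lift_near y g : 0 < g -> exists2 del, 0 < del &
  forall b b' c, fib y b -> fib y b' -> d b' c < del -> d (r b) (r c) < del ->
  d b c < g.
Proof.
move=> g0; have g20 : 0 < g / 2 by lra.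
have [del del0 unif] := pfiber_r_uniform y g20.
exists (Num.min (del / 2) (g / 2)) => [|b b' c yb yb' db'c drbc].
  by rewrite lt_min; apply/andP; split; lra.
have m1 : Num.min (del / 2) (g / 2) <= del / 2 by rewrite ge_min lexx.
have m2 : Num.min (del / 2) (g / 2) <= g / 2 by rewrite ge_min lexx orbT.
have dbb' : d b b' < g / 2.
  apply: unif => //; have := d_triangle (r b) (r c) (r b').
  by have := d_r c b'; rewrite (d_sym c b'); lra.
by have := d_triangle b b' c; lra.
Qed.

Lemma mul_uniform_compact (E F : set G) g : compact E -> compact F -> 0 < g ->
  exists2 del, 0 < del & forall a b a' b', E a -> F b -> composable Γ a b ->
    composable Γ a' b' -> d a a' < del -> d b b' < del ->
    d (m a b) (m a' b') < g.
Proof.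
move=> cE cF g0; apply: contrapT => nonunif.
have bad n : exists p : (G * G) * (G * G), [/\ E p.1.1, F p.1.2,
    composable Γ p.1.1 p.1.2, composable Γ p.2.1 p.2.2 &
    [/\ d p.1.1 p.2.1 < n.+1%:R^-1, d p.1.2 p.2.2 < n.+1%:R^-1 &
        g <= d (m p.1.1 p.1.2) (m p.2.1 p.2.2)]].
  apply: contrapT => h; apply: nonunif; exists n.+1%:R^-1.
    by rewrite invr_gt0 ltr0Sn.
  move=> a b a' b' Ea Fb cab cab' da db; rewrite ltNge; apply/negP => gm.
  by apply: h; exists ((a, b), (a', b')).
have /choice [p hp] := bad.
have /all_and5 [Ep Fp cp cp' close] := hp; have /all_and3 [da db far] := close.
have [a [b [Ea Fb cab]]] := compact_joint_cluster hd cE cF Ep Fp.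
have comp_ab : composable Γ a b.
  apply: d_small_eq => e e0; have e20 : 0 < e / 2 by lra.
  have [n [_ dan dbn]] := cab (e / 2) 0%N e20.
  have := d_s a (p n).1.1; have := d_r (p n).1.2 b.
  have := d_triangle (s a) (s (p n).1.1) (r b).
  by rewrite (cp n) (d_sym (p n).1.2 b); lra.
have g20 : 0 < g / 2 by lra.
have [del del0 cm] := mul_dist_continuous hd mul_cont comp_ab g20.
have del20 : 0 < del / 2 by lra.
have [N HN] := invSn_lt_eventually del20.
have [n [Nn dan dbn]] := cab (del / 2) N del20.
have dan' : d a (p n).2.1 < del.
  have := d_triangle a (p n).1.1 (p n).2.1; have := HN n Nn.
  by move: (n.+1%:R^-1) (da n) => w; lra.
have dbn' : d b (p n).2.2 < del.
  have := d_triangle b (p n).1.2 (p n).2.2; have := HN n Nn.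
  by move: (n.+1%:R^-1) (db n) => w; lra.
have := cm _ _ (cp n) (_ : d a (p n).1.1 < del) (_ : d b (p n).1.2 < del).
have := cm _ _ (cp' n) dan' dbn'.
have := d_triangle (m (p n).1.1 (p n).1.2) (m a b) (m (p n).2.1 (p n).2.2).
by rewrite (d_sym _ (m a b)); have := far n; lra.
Qed.

(* Factors are matched fibrewise; composability is restored by lifting the
   second factor through [r], which [pfiber_lift_near] keeps close. *)
Lemma mul_pfiber_near x y eps : composable Γ' x y -> 0 < eps ->
  exists2 t, 0 < t & forall x2 y2, composable Γ' x2 y2 ->
    fib y2 `<=` enlarge d (fib y) t ->
    (fib x2 `<=` enlarge d (fib x) t ->
       fib (m' x2 y2) `<=` enlarge d (fib (m' x y)) eps) /\
    (fib x `<=` enlarge d (fib x2) t ->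
       fib (m' x y) `<=` enlarge d (fib (m' x2 y2)) eps).
Proof.
move=> cxy eps0.
have [del del0 mul_unif] :=
  mul_uniform_compact (@pfiber_compact x) (@pfiber_compact y) eps0.
have [del' del'0 lift_near] := pfiber_lift_near y del0.
exists (Num.min del del') => [|x2 y2 cxy2 y2y]; first by rewrite lt_min del0 del'0.
have t1 : Num.min del del' <= del by rewrite ge_min lexx.
have t2 : Num.min del del' <= del' by rewrite ge_min lexx orbT.
split=> [x2x c /(fib_mul cxy2) [a2 [b2 [pa2 pb2 cab2 ->]]]|
         xx2 c /(fib_mul cxy) [a [b [xa yb cab ->]]]].
- have [a xa da] := x2x a2 pa2; have [b yb db] := y2y b2 pb2.
  have ysa : r' y = pi (s a) by rewrite pi_sE xa cxy.
  have [b1 [rb1 yb1]] := pi_lift (unit_s hΓ a) ysa.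
  have cab1 : composable Γ a b1 by rewrite /composable rb1.
  exists (m a b1); first by rewrite /pfiber /= pi_gmulE // xa yb1.
  rewrite d_sym; apply: mul_unif => //; first by rewrite d_sym; lra.
  apply: (lift_near b1 b) => //; first by rewrite d_sym; lra.
  by rewrite rb1 -cab2; have := d_s a a2; rewrite (d_sym a a2); lra.
- have [a2 x2a2 da] := xx2 a xa.
  have y2sa2 : r' y2 = pi (s a2) by rewrite pi_sE x2a2 cxy2.
  have [b2 [rb2 y2b2]] := pi_lift (unit_s hΓ a2) y2sa2.
  have [b3 yb3 db3] := y2y b2 y2b2.
  have cab2 : composable Γ a2 b2 by rewrite /composable rb2.
  exists (m a2 b2); first by rewrite /pfiber /= pi_gmulE // x2a2 y2b2.
  apply: mul_unif => //; first lra.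
  apply: (lift_near b b3) => //; first by rewrite d_sym; lra.
  by rewrite rb2 -cab; have := d_s a a2; lra.
Qed.

Lemma dHprime_mul_continuous x y : H' x -> H' y -> composable Γ' x y ->
  forall eps, 0 < eps -> exists2 del, 0 < del & forall x2 y2,
    H' x2 -> H' y2 -> composable Γ' x2 y2 -> dH' x x2 < del -> dH' y y2 < del ->
    dH' (m' x y) (m' x2 y2) < eps.
Proof.
move=> Hx Hy cxy eps eps0; have eps20 : 0 < eps / 2 by lra.
have [t t0 near] := mul_pfiber_near cxy eps20.
exists t => // x2 y2 Hx2 Hy2 cxy2 dx dy.
have [x2x xx2] := dHprime_lt_enlarge Hx Hx2 dx.
have [y2y _] := dHprime_lt_enlarge Hy Hy2 dy.
have [near1 near2] := near x2 y2 cxy2 y2y.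
apply: (@le_lt_trans _ _ (eps / 2)); last lra.
exact: hdist_le eps20 (near1 x2x) (near2 xx2).
Qed.

Lemma dH_mul_continuous x y : H x -> H y -> composable Γ x y ->
  forall eps, 0 < eps -> exists2 del, 0 < del & forall x2 y2,
    H x2 -> H y2 -> composable Γ x2 y2 -> dH x x2 < del -> dH y y2 < del ->
    dH (m x y) (m x2 y2) < eps.
Proof.
move=> Hx Hy cxy eps eps0; have eps20 : 0 < eps / 2 by lra.
have [del1 del10 near1] := mul_dist_continuous hd mul_cont cxy eps20.
have [del2 del20 near2] := dHprime_mul_continuous Hx Hy (pi_composable cxy) eps20.
exists (Num.min del1 del2) => [|x2 y2 Hx2 Hy2 cxy2].
  by rewrite lt_min del10 del20.
rewrite !lt_min => /andP [dx1 dx2] /andP [dy1 dy2].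
have := near1 x2 y2 cxy2
  (le_lt_trans (dH_ge_d _ _) dx1) (le_lt_trans (dH_ge_d _ _) dy1).
have := near2 _ _ Hx2 Hy2 (pi_composable cxy2)
  (le_lt_trans (dH_ge_dHprime _ _) dx2) (le_lt_trans (dH_ge_dHprime _ _) dy2).
by rewrite /Defs.dH !pi_gmulE //; lra.
Qed.

Lemma Hprime_subgroupoid : subgroupoid Γ' H'.
Proof.
split=> [x Hx|x y Hx _ cxy]; last exact: H'_mul.
by split; [exact: H'_r|exact: H'_s|exact: H'_inv].
Qed.

Lemma H_subgroupoid : subgroupoid Γ H.
Proof.
have [H'ops H'mul] := Hprime_subgroupoid.
split=> [x Hx|x y Hx Hy cxy].
  by have [? ? ?] := H'ops _ Hx; split; rewrite /preimage /= ?pi_rE ?pi_sE ?pi_invE.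
by rewrite /preimage /= pi_gmulE //; apply: H'mul => //; exact: pi_composable.
Qed.

Lemma Hprime_metric_lch_groupoid : metric_lch_topological_groupoid Γ' H' dH'.
Proof.
have [_ cr'] := mcontinuous_fibrewise pi_rE H'_r fib_r d_r.
have [_ cs'] := mcontinuous_fibrewise pi_sE H'_s fib_s d_s.
have [_ ci'] := mcontinuous_fibrewise pi_invE H'_inv fib_inv d_inv_le.
split; first exact: Hprime_subgroupoid.
split; first exact: metric_mhausdorff dHprime_metric.
split; first exact: Hprime_mlocally_compact.
by do 3 split=> //; exact: dHprime_mul_continuous.
Qed.

Lemma H_metric_lch_groupoid : metric_lch_topological_groupoid Γ H dH.
Proof.
have [cr _] := mcontinuous_fibrewise pi_rE H'_r fib_r d_r.
have [cs _] := mcontinuous_fibrewise pi_sE H'_s fib_s d_s.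
have [ci _] := mcontinuous_fibrewise pi_invE H'_inv fib_inv d_inv_le.
split; first exact: H_subgroupoid.
split; first exact: metric_mhausdorff dH_metric.
split; first exact: H_mlocally_compact.
by do 3 split=> //; exact: dH_mul_continuous.
Qed.

Lemma pi_mopen_map : mopen_map H dH H' dH' pi.
Proof.
move=> U [UH Uo]; split=> [_ [x Ux <-]|_ [x Ux <-]]; first exact: UH.
have [e e0 eU] := Uo x Ux; exists (e / 2) => [|y [Hy dy]]; first lra.
have [_ near] := dHprime_lt_enlarge (UH x Ux) Hy dy.
have [z yz dz] := near x erefl.
exists z => //; apply: eU; split; first by rewrite /preimage /= yz.
by rewrite /Defs.dH yz; lra.
Qed.

Lemma pi_mcontinuous : mcontinuous H dH H' dH' pi.
Proof. by apply: lipschitz1_mcontinuous => // x y _ _; exact: dH_ge_dHprime. Qed.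

Lemma pi_mproper : mproper H dH H' dH' pi.
Proof.
move=> K cK; apply: (seq_compact_mcompact dH_metric) => [x []//|u Ku].
have [y Ky cy] := mcompact_seq_compact dHprime_metric cK (fun n => (Ku n).2).
have [z pz cz] := lift_cluster (cK.1 y Ky) cy.
by exists z => //; split; rewrite /preimage /= pz //; exact: cK.1.
Qed.

End FibreMetrics.

Theorem theorem7p70 (R : realType) (G G' : ptopologicalType)
  (Γ : groupoid G) (Γ' : groupoid G')
  (lam : G -> {measure set (Borel G) -> \bar R})
  (lam' : G' -> {measure set (Borel G') -> \bar R})
  (sigma : G -> G -> R * R) (sigma' : G' -> G' -> R * R)
  (dG : G -> G -> R) (pi : G -> G')
  (hG : lch_topological_groupoid Γ) (hG' : lch_topological_groupoid Γ')
  (hlam : haar_system Γ lam) (hlam' : haar_system Γ' lam')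
  (hsig : two_cocycle Γ sigma) (hsig' : two_cocycle Γ' sigma')
  (hG'sc : @second_countable G')
  (hdG : metrizes dG)
  (hdinv : forall x y, dG (g_inv Γ x) (g_inv Γ y) = dG x y)
  (hdr : forall x y, dG (g_r Γ x) (g_r Γ y) <= dG x y)
  (hds : forall x y, dG (g_s Γ x) (g_s Γ y) <= dG x y)
  (hpi_cont : continuous pi) (hpi_proper : proper_map pi)
  (hpi_mor : groupoid_morphism_on Γ Γ' setT pi)
  (hpi_fib : forall u, g_unit Γ u ->
     [/\ (forall x, range_fiber Γ u x -> range_fiber Γ' (pi u) (pi x)),
         {within range_fiber Γ u, continuous pi} &
         exists g : G' -> G,
           [/\ (forall x, range_fiber Γ u x -> g (pi x) = x),
               (forall y, range_fiber Γ' (pi u) y ->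
                  range_fiber Γ u (g y) /\ pi (g y) = y) &
               {within range_fiber Γ' (pi u), continuous g}]])
  (hpi_meas : forall u, g_unit Γ u -> forall E : set G, borel_set E ->
     E `<=` range_fiber Γ u -> lam u E = lam' (pi u) (pi @` E))
  (hpi_sig : forall x y, composable Γ x y -> sigma x y = sigma' (pi x) (pi y))
  (hpi_reg : regular_map dG pi) :
  let H' := Hprime pi in
  let H := pi @^-1` H' in
  let dH' := dHprime dG pi in
  let dH := dH dG pi in
  [/\ metric_on H' dH', metric_on H dH,
      metric_lch_topological_groupoid Γ' H' dH',
      metric_lch_topological_groupoid Γ H dH &
      [/\ mopen_map H dH H' dH' pi, mcontinuous H dH H' dH' pi,
          mproper H dH H' dH' pi & groupoid_morphism_on Γ Γ' H pi]].
Proof.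
have [hΓ [hGH [hLC [_ [_ [_ hmulc]]]]]] := hG.
have [hΓ' [hG'H _]] := hG'.
have pi_inj a b : g_r Γ a = g_r Γ b -> pi a = pi b -> a = b.
  move=> rab pab; have [_ _ [g [gK _ _]]] := hpi_fib _ (unit_r hΓ a).
  by rewrite -(gK a erefl) pab gK // /range_fiber /= rab.
have pi_lift u : g_unit Γ u -> forall y, g_r Γ' y = pi u ->
    exists b, g_r Γ b = u /\ pi b = y.
  move=> uu y ry; have [_ _ [g [_ gK' _]]] := hpi_fib u uu.
  by have [rg pg] := gK' y ry; exists (g y).
split.
- by apply: dHprime_metric.
- by apply: dH_metric.
- by apply: (Hprime_metric_lch_groupoid (Γ := Γ)).
- by apply: (H_metric_lch_groupoid (Γ' := Γ')).
- split; [by apply: pi_mopen_map|by apply: pi_mcontinuous|by apply: pi_mproper|].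
  by move=> x y _ _; exact: hpi_mor.
Qed.
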